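(* Let $p$ be an odd prime. For all $x\in\mathbb C_p$ with $|x|_p>1$: (1) $G_{p,E}(1-x)+G_{p,E}(x)=0$; (2) $G_{p,E}(x)-G_{p,E}(-x)=2x(\log_p(x)-1)$; (3) $G_{p,E}(1+x)+G_{p,E}(x)=2x(\log_p(x)-1)$.
   Context: $|\cdot|_p$ is the absolute value on $\mathbb C_p$ with $|p|_p=p^{-1}$, and $\log_p$ is Iwasawa's $p$-adic logarithm. For $x\in\mathbb C_p$ with $|x|_p>1$, $G_{p,E}(x)=\lim_{N\to\infty}\sum_{a=0}^{p^N-1}\{(x+a)\log_p(x+a)-(x+a)\}(-1)^a$. *)

(* C_p is given axiomatically (characterised up to isometric
   isomorphism). *)
From HB Require Import structures.
From mathcomp Require Import all_boot all_order all_algebra.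
From mathcomp Require Import reals.
From Stdlib Require Import ClassicalEpsilon.
Set Implicit Arguments. Unset Strict Implicit. Unset Printing Implicit Defensive.
Import Order.TTheory GRing.Theory Num.Theory.
Local Open Scope ring_scope.

Section Padic.
Variables (R : realType) (K : closedFieldType) (v : K -> R).

Definition nonarch_abs : Prop :=
  (forall x, 0 <= v x) /\ (forall x, v x = 0 <-> x = 0) /\
  (forall x y, v (x * y) = v x * v y) /\
  (forall x y, v (x + y) <= Num.max (v x) (v y)).

Definition cvgK (u : nat -> K) (l : K) : Prop :=
  forall e : R, 0 < e -> exists N, forall n, (N <= n)%N -> v (u n - l) < e.

Definition cauchyK (u : nat -> K) : Prop :=
  forall e : R, 0 < e -> exists N, forall m n, (N <= m)%N -> (N <= n)%N ->
    v (u m - u n) < e.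

Definition limK (u : nat -> K) : K := epsilon (inhabits 0) (fun l => cvgK u l).

(* (K, v) is (isometrically isomorphic to) C_p : an algebraically closed
   (K : closedFieldType), characteristic 0, complete non-archimedean valued
   field with |p| = p^-1, in which the elements algebraic over Q are dense. *)
Definition is_Cp (p : nat) : Prop :=
  nonarch_abs /\
  (forall n : nat, (0 < n)%N -> n%:R != 0 :> K) /\
  v p%:R = (p%:R)^-1 /\
  (forall u, cauchyK u -> exists l, cvgK u l) /\
  (forall (x : K) (e : R), 0 < e -> exists (y : K) (q : {poly rat}),
      q != 0 /\ root (map_poly ratr q) y /\ v (x - y) < e).

Definition iwasawa_log (p : nat) (lg : K -> K) : Prop :=
  (forall x y, x != 0 -> y != 0 -> lg (x * y) = lg x + lg y) /\
  lg p%:R = 0 /\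
  (forall x, v (x - 1) < 1 ->
     cvgK (fun N => \sum_(1 <= n < N) (-1) ^+ n.+1 * (x - 1) ^+ n / n%:R) (lg x)).

Definition GpE (p : nat) (lg : K -> K) (x : K) : K :=
  limK (fun N => \sum_(0 <= a < p ^ N)
          ((x + a%:R) * lg (x + a%:R) - (x + a%:R)) * (-1) ^+ a).

End Padic.

From HB Require Import structures.
From mathcomp Require Import all_boot all_order all_algebra.
From mathcomp Require Import reals.
From mathcomp Require Import ring lra.
From Stdlib Require Import ClassicalEpsilon.
Set Implicit Arguments. Unset Strict Implicit. Unset Printing Implicit Defensive.
Import Order.TTheory GRing.Theory Num.Theory.
Local Open Scope ring_scope.

(* Write f(y) = y log y - y and S_N(y) = sum_(a < p^N) (-1)^a f(y + a).
   Since p^N is odd, S_N(1 + y) + S_N(y) telescopes to f(y) + f(y + p^N), and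
   reversing the range of summation gives S_N(1 - y) = - S_N(y - p^N) because
   f is odd.  On the region |y - x| <= 1 or |y + x| <= 1, stable under integer
   shifts, |y| = |x| > 1 and log is bounded, so f is Lipschitz for small shifts:
   shifting by p^N changes f and S_N by O(p^-N).  Splitting S_(N+1) into p
   blocks of length p^N shows S_(N+1) - S_N = O(p^-N) as well, so the limits
   exist, and G(1 + y) + G(y) = 2 f(y), G(1 - y) = - G(y).  Taking y = x and
   y = 1 + x gives the three identities. *)

Section Ultrametric.
Variables (R : realType) (K : closedFieldType) (v : K -> R).
Hypothesis hv : nonarch_abs v.

Lemma v_ge0 x : 0 <= v x. Proof. by case: hv. Qed.
Lemma v_eq0 x : v x = 0 <-> x = 0. Proof. by case: hv => _ []. Qed.
Lemma vM x y : v (x * y) = v x * v y. Proof. by case: hv => _ [_ []]. Qed.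
Lemma vD_max x y : v (x + y) <= Num.max (v x) (v y). Proof. by case: hv => _ [_ [_]]. Qed.

Lemma v0 : v 0 = 0. Proof. exact/v_eq0. Qed.

Lemma v1 : v 1 = 1.
Proof.
have v1_neq0 : v 1 != 0 by apply/eqP => /v_eq0/eqP; rewrite oner_eq0.
by apply: (mulIf v1_neq0); rewrite mul1r -vM mulr1.
Qed.

Lemma vN x : v (- x) = v x.
Proof.
have vN1 : v (-1) = 1.
  apply/eqP; rewrite -sqrp_eq1 ?v_ge0 // expr2 -vM mulrNN mulr1 v1 //.
by rewrite -mulN1r vM vN1 mul1r.
Qed.

Lemma vX x n : v (x ^+ n) = v x ^+ n.
Proof. by elim: n => [|n IH]; rewrite ?expr0 ?v1 // !exprS vM IH. Qed.

Lemma vV x : v x^-1 = (v x)^-1.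
Proof.
have [->|x_neq0] := eqVneq x 0; first by rewrite invr0 v0 invr0.
have vx_neq0 : v x != 0 by apply: contra_neq x_neq0 => /v_eq0.
by apply: (mulfI vx_neq0); rewrite -vM !divff // v1.
Qed.

Lemma v_signr n : v ((-1) ^+ n) = 1.
Proof. by rewrite vX vN v1 expr1n. Qed.

Lemma vD_le x y b : v x <= b -> v y <= b -> v (x + y) <= b.
Proof. by move=> hx hy; apply: le_trans (vD_max x y) _; rewrite ge_max hx hy. Qed.

Lemma vB_le x y b : v x <= b -> v y <= b -> v (x - y) <= b.
Proof. by move=> hx hy; apply: vD_le; rewrite ?vN. Qed.

Lemma vD_lt x y b : v x < b -> v y < b -> v (x + y) < b.
Proof. by move=> hx hy; apply: le_lt_trans (vD_max x y) _; rewrite gt_max hx hy. Qed.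

Lemma vB_lt x y b : v x < b -> v y < b -> v (x - y) < b.
Proof. by move=> hx hy; apply: vD_lt; rewrite ?vN. Qed.

Lemma vD_eq x y : v y < v x -> v (x + y) = v x.
Proof.
move=> vyx; apply/eqP; rewrite eq_le; apply/andP; split.
  by apply: vD_le => //; apply: ltW.
rewrite leNgt; apply/negP => vxy.
by have := vB_lt vxy vyx; rewrite addrK ltxx.
Qed.

Lemma v_natr_le1 n : v n%:R <= 1.
Proof.
elim: n => [|n IH]; first by rewrite v0.
by rewrite -natr1; apply: vD_le; rewrite ?v1.
Qed.

Lemma v_sum_le (I : eqType) (r : seq I) (F : I -> K) b :
  0 <= b -> {in r, forall i, v (F i) <= b} -> v (\sum_(i <- r) F i) <= b.
Proof.
move=> b_ge0 hF; rewrite big_seq; elim/big_rec: _ => [|i y ir hy]; first by rewrite v0.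
exact: vD_le (hF _ ir) hy.
Qed.

Lemma cvgK_cst (c : K) : cvgK v (fun=> c) c.
Proof. by move=> e e_gt0; exists 0%N => n _; rewrite subrr v0. Qed.

Lemma cvgKD u w a b : cvgK v u a -> cvgK v w b -> cvgK v (fun n => u n + w n) (a + b).
Proof.
move=> ua wb e e_gt0; have [N1 h1] := ua e e_gt0; have [N2 h2] := wb e e_gt0.
exists (maxn N1 N2) => n; rewrite geq_max => /andP[n1 n2].
by rewrite opprD addrACA; apply: vD_lt; [apply: h1|apply: h2].
Qed.

Lemma cvgKN u a : cvgK v u a -> cvgK v (fun n => - u n) (- a).
Proof. by move=> ua e e_gt0; have [N h] := ua e e_gt0; exists N => n hn; rewrite -opprD vN h. Qed.

Lemma cvgK_near u w a : cvgK v u a ->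
  (forall e, 0 < e -> exists N, forall n, (N <= n)%N -> v (w n - u n) < e) ->
  cvgK v w a.
Proof.
move=> ua wu e e_gt0; have [N1 h1] := ua e e_gt0; have [N2 h2] := wu e e_gt0.
exists (maxn N1 N2) => n; rewrite geq_max => /andP[n1 n2].
by rewrite -(subrK (u n) (w n)) -addrA; apply: vD_lt; [apply: h2|apply: h1].
Qed.

Lemma cvgK_unique u a b : cvgK v u a -> cvgK v u b -> a = b.
Proof.
move=> ua ub; apply/eqP; rewrite -subr_eq0; apply/eqP/v_eq0/eqP.
rewrite eq_le v_ge0 andbT; apply/ler_addgt0Pr => e e_gt0; rewrite add0r.
have [n hn] : exists n, v (u n - b) < e /\ v (u n - a) < e.
  have [N1 h1] := ua e e_gt0; have [N2 h2] := ub e e_gt0.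
  by exists (maxn N1 N2); rewrite h1 ?h2 ?leq_maxl ?leq_maxr.
have -> : a - b = (u n - b) - (u n - a) by ring.
by case: hn => hb ha; apply/ltW/vB_lt.
Qed.

Lemma limK_eq u a : cvgK v u a -> limK v u = a.
Proof.
move=> ua; apply/esym/(cvgK_unique ua).
by apply: (epsilon_spec (inhabits 0) (cvgK v u)); exists a.
Qed.

Lemma cvgK_le u l b N : cvgK v u l -> (forall n, (N <= n)%N -> v (u n) <= b) -> v l <= b.
Proof.
move=> ul ub; have b_ge0 : 0 <= b by apply: le_trans (ub N (leqnn N)); apply: v_ge0.
apply/ler_addgt0Pr => e e_gt0; have [M hM] := ul e e_gt0.
have -> : l = u (maxn N M) - (u (maxn N M) - l) by ring.
apply: le_trans (vB_le (b := Num.max b e) _ _) _.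
- by rewrite le_max ub ?leq_maxl.
- by rewrite le_max (ltW (hM _ (leq_maxr _ _))) orbT.
- by rewrite ge_max lerDl ltW // lerDr.
Qed.

Lemma cauchyK_steps u :
  (forall e, 0 < e -> exists N, forall n, (N <= n)%N -> v (u n.+1 - u n) < e) ->
  cauchyK v u.
Proof.
move=> hu e e_gt0; have [N hN] := hu e e_gt0.
have uN : forall m, (N <= m)%N -> v (u m - u N) < e.
  elim=> [|m IH]; first by rewrite leqn0 => /eqP ->; rewrite subrr v0.
  rewrite leq_eqVlt => /orP[/eqP <-|Nm]; first by rewrite subrr v0.
  by rewrite -(subrK (u m) (u m.+1)) -addrA; apply: vD_lt; [apply: hN|apply: IH].
exists N => m n Nm Nn; have -> : u m - u n = (u m - u N) - (u n - u N) by ring.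
exact: vB_lt (uN m Nm) (uN n Nn).
Qed.

End Ultrametric.

Section RealBounds.
Variable R : realFieldType.

Lemma bernoulli_ineq (V : R) n : 1 <= V -> 1 + n%:R * (V - 1) <= V ^+ n.
Proof.
move=> V_ge1; elim: n => [|n IH]; first by rewrite mul0r addr0 expr0.
rewrite exprS -natr1.
have h1 : 0 <= V * (V ^+ n - (1 + n%:R * (V - 1))) by apply: mulr_ge0; lra.
have h2 : 0 <= n%:R * ((V - 1) * (V - 1)) by apply: mulr_ge0 => //; apply: mulr_ge0; lra.
nra.
Qed.

Lemma exprV_mul_natr_le (V : R) n : 1 < V -> V^-1 ^+ n * n%:R <= (V - 1)^-1.
Proof.
move=> V_gt1; have Vn_gt0 : 0 < V ^+ n by apply: exprn_gt0; lra.
rewrite exprVn mulrC ler_pdivrMr // mulrC ler_pdivlMr; last by lra.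
have := bernoulli_ineq n (ltW V_gt1); lra.
Qed.

Lemma exprn_mul_natrSS_le (w : R) k : 0 <= w <= 2^-1 -> w ^+ k * k.+2%:R <= 2.
Proof.
case/andP=> w_ge0 w_le; elim: k => [|k IH]; first by rewrite expr0 mul1r.
have h0 : 0 <= w ^+ k by apply: exprn_ge0.
have h1 : w ^+ k <= 1 by apply: exprn_ile1; lra.
rewrite exprS -[k.+3%:R]natr1 -[k.+2%:R]natr1 in IH *.
have : 0 <= k%:R :> R by [].
nra.
Qed.

End RealBounds.

Section AlternatingSum.
Variables (K : comNzRingType) (f : K -> K).

Definition altsum (M : nat) (y : K) := \sum_(0 <= a < M) f (y + a%:R) * (-1) ^+ a.

Let signr_oddN1 M : odd M -> (-1) ^+ M = -1 :> K.
Proof. by move=> M_odd; rewrite -signr_odd M_odd expr1. Qed.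

Lemma altsum_shift1 M y : odd M -> altsum M (1 + y) + altsum M y = f y + f (y + M%:R).
Proof.
move=> M_odd; rewrite /altsum -big_split /=.
have telescope : forall n, \sum_(0 <= a < n) (f (y + a.+1%:R) + f (y + a%:R)) * (-1) ^+ a
    = f y - (-1) ^+ n * f (y + n%:R).
  elim=> [|n IH]; first by rewrite big_geq // expr0 mul1r addr0 subrr.
  by rewrite big_nat_recr //= IH exprS; ring.
have := telescope M; rewrite (signr_oddN1 M_odd) mulN1r opprK => <-.
by apply: eq_big_nat => a _; rewrite -mulrDl -natr1 addrA [1 + y]addrC addrAC.
Qed.

Lemma altsum_reflect M y : odd M -> (forall w, f (- w) = - f w) ->
  altsum M (1 - y) = - altsum M (y - M%:R).
Proof.
move=> M_odd f_odd; rewrite /altsum big_nat_rev /= -sumrN.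
apply: eq_big_nat => a /andP[_ aM]; rewrite add0n natrB //.
have -> : (-1) ^+ (M - a.+1) = (-1) ^+ a :> K.
  by rewrite -signr_odd oddB // M_odd /= negbK signr_odd.
have -> : 1 - y + (M%:R - a.+1%:R) = - (y - M%:R + a%:R) by rewrite -natr1; ring.
by rewrite f_odd mulNr.
Qed.

Lemma altsum_mul M k y : odd M ->
  altsum (M * k) y = \sum_(0 <= j < k) (-1) ^+ j * altsum M (y + (j * M)%:R).
Proof.
move=> M_odd; elim: k => [|k IH]; first by rewrite muln0 /altsum !big_geq.
rewrite mulnSr /altsum (big_cat_nat (n := (M * k)%N)) ?leq_addr //= -/(altsum _ _) IH.
rewrite big_nat_recr //=; congr (_ + _).
rewrite -{1}(add0n (M * k)%N) big_addn addKn mulr_sumr; apply: eq_big_nat => a _.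
by rewrite exprD exprM (signr_oddN1 M_odd) (mulnC M k) addnC natrD addrA; ring.
Qed.

Lemma altsum_mul_sub M k y : odd M -> odd k ->
  altsum (M * k) y - altsum M y =
  \sum_(0 <= j < k) (-1) ^+ j * (altsum M (y + (j * M)%:R) - altsum M y).
Proof.
move=> M_odd k_odd; rewrite altsum_mul //; under [RHS]eq_bigr do rewrite mulrBr.
rewrite sumrB -mulr_suml; congr (_ - _).
have -> : \sum_(0 <= j < k) (-1) ^+ j = (odd k)%:R :> K.
  elim: (k) => [|n IH]; first by rewrite big_geq.
  by rewrite big_nat_recr //= IH -signr_odd; case: (odd n) => /=; rewrite ?expr0 ?expr1; ring.
by rewrite k_odd mul1r.
Qed.

End AlternatingSum.

Section Padic.
Variables (R : realType) (K : closedFieldType) (v : K -> R) (p : nat).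
Hypotheses (p_prime : prime p) (p_odd : odd p) (Cp : is_Cp v p).

Let hv : nonarch_abs v. Proof. by case: Cp. Qed.
Let natr_neq0 n : (0 < n)%N -> n%:R != 0 :> K. Proof. by case: Cp => _ [h _]; apply: h. Qed.
Let v_p : v p%:R = p%:R^-1. Proof. by case: Cp => _ [_ []]. Qed.
Let p_gt0 : (0 < p)%N := prime_gt0 p_prime.
Let odd_pexp n : odd (p ^ n). Proof. by rewrite oddX p_odd orbT. Qed.

Lemma natr_p_ge2 : 2 <= p%:R :> R.
Proof. by rewrite ler_nat prime_gt1. Qed.

Lemma v_natr_notdvd m : ~~ (p %| m)%N -> v m%:R = 1.
Proof.
move=> p_ndvd_m; have m_gt0 : (0 < m)%N by case: m p_ndvd_m => //; rewrite dvdn0.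
have [a b bezout _] := egcdnP p m_gt0.
have /eqP cop : coprime m p by rewrite coprime_sym prime_coprime.
rewrite cop in bezout.
have one_eq : 1 = a%:R * m%:R - b%:R * p%:R :> K by rewrite -!natrM bezout natrD; ring.
apply/eqP; rewrite eq_le (v_natr_le1 hv) /=; rewrite leNgt; apply/negP => vm_lt1.
have : v 1 < 1.
  rewrite one_eq; apply: (vB_lt hv); rewrite (vM hv).
    by apply: le_lt_trans vm_lt1; rewrite ler_piMl ?(v_ge0 hv) ?(v_natr_le1 hv).
  rewrite v_p; apply: le_lt_trans (_ : 1 * p%:R^-1 < 1).
    by rewrite ler_wpM2r ?invr_ge0 ?(v_natr_le1 hv).
  by rewrite mul1r invf_lt1; have := natr_p_ge2; lra.
by rewrite (v1 hv) ltxx.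
Qed.

Lemma v_natr_pexp n : v (p ^ n)%:R = (p ^ n)%:R^-1.
Proof. by rewrite !natrX (vX hv) v_p exprVn. Qed.

Lemma v_natr_pexp_le_half n : (0 < n)%N -> v (p ^ n)%:R <= 2^-1.
Proof.
move=> n_gt0; rewrite v_natr_pexp lef_pV2 ?posrE ?ltr0n ?expn_gt0 ?p_gt0 //.
apply: le_trans natr_p_ge2 _; rewrite ler_nat -{1}(expn1 p) leq_pexp2l ?p_gt0 //.
Qed.

Lemma v_natr_inv_le n : (0 < n)%N -> (v n%:R)^-1 <= n%:R.
Proof.
move=> n_gt0; have [m cop_pm n_eq] := pfactor_coprime p_prime n_gt0.
rewrite n_eq muln_gt0 in n_gt0 *; case/andP: n_gt0 => m_gt0 _.
rewrite natrM (vM hv) v_natr_notdvd -?prime_coprime // mul1r v_natr_pexp invrK.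
by rewrite natrM ler_peMl // ler1n.
Qed.

Lemma pexp_vanish (B e : R) : 0 < e ->
  exists N, forall n, (N <= n)%N -> (0 < n)%N /\ B * v (p ^ n)%:R < e.
Proof.
move=> e_gt0; have [B_le0|B_gt0] := lerP B 0.
  exists 1%N => n n_gt0; split=> //; apply: le_lt_trans e_gt0.
  by rewrite mulr_le0_ge0 ?(v_ge0 hv).
have Be_ge0 : 0 <= B / e by apply: divr_ge0; lra.
exists (maxn (Num.bound (B / e)) 1) => n; rewrite geq_max => /andP[bound_le_n n_gt0].
split=> //; rewrite v_natr_pexp ltr_pdivrMr ?ltr0n ?expn_gt0 ?p_gt0 // -ltr_pdivrMl // mulrC.
apply: lt_le_trans (archi_boundP Be_ge0) _; rewrite ler_nat.
exact: leq_trans bound_le_n (ltnW (ltn_expl _ (prime_gt1 p_prime))).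
Qed.

Lemma cvgK_pexp_close (B : R) u w a : cvgK v u a ->
  (forall n, (0 < n)%N -> v (w n - u n) <= B * v (p ^ n)%:R) -> cvgK v w a.
Proof.
move=> ua wu; apply: (cvgK_near hv ua) => e e_gt0.
have [N hN] := pexp_vanish B e_gt0; exists N => n /hN [n_gt0].
exact: le_lt_trans (wu n n_gt0).
Qed.

Lemma cvgK_pexp_steps (B : R) u :
  (forall n, (0 < n)%N -> v (u n.+1 - u n) <= B * v (p ^ n)%:R) -> exists l, cvgK v u l.
Proof.
move=> hu; case: Cp => _ [_ [_ [complete _]]]; apply/complete/(cauchyK_steps hv) => e e_gt0.
have [N hN] := pexp_vanish B e_gt0; exists N => n /hN [n_gt0].
exact: le_lt_trans (hu n n_gt0).
Qed.

Variable lg : K -> K.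
Hypothesis lg_iwasawa : iwasawa_log v p lg.

Lemma lgM x y : x != 0 -> y != 0 -> lg (x * y) = lg x + lg y.
Proof. by case: lg_iwasawa => h _; apply: h. Qed.

Lemma lg1 : lg 1 = 0.
Proof.
have := lgM (oner_neq0 K) (oner_neq0 K); rewrite mulr1 => h.
by apply: (addrI (lg 1)); rewrite addr0 -h.
Qed.

Lemma lgN x : lg (- x) = lg x.
Proof.
have N1_neq0 : (-1 : K) != 0 by rewrite oppr_eq0 oner_neq0.
have lgN1 : lg (-1) = 0.
  have /eqP := lgM N1_neq0 N1_neq0; rewrite mulrNN mulr1 lg1 eq_sym -mulr2n.
  by rewrite -mulr_natr mulf_eq0 (negbTE (natr_neq0 (isT : (0 < 2)%N))) orbF => /eqP.
have [->|x_neq0] := eqVneq x 0; first by rewrite oppr0.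
by rewrite -mulN1r lgM // lgN1 add0r.
Qed.

Definition lgser (t : K) (N : nat) := \sum_(1 <= n < N) (-1) ^+ n.+1 * t ^+ n / n%:R.

Lemma lgser_cvg t : v t < 1 -> cvgK v (lgser t) (lg (1 + t)).
Proof.
by move=> vt_lt1; case: lg_iwasawa => _ [_ /(_ (1 + t))]; rewrite addrAC subrr add0r; apply.
Qed.

Lemma v_lgser_term t n : v ((-1) ^+ n.+1 * t ^+ n / n%:R) <= v t ^+ n * n%:R.
Proof.
case: n => [|n]; first by rewrite invr0 mulr0 (v0 hv) mulr0.
rewrite -mulrA (vM hv) (v_signr hv) mul1r (vM hv) (vV hv) (vX hv).
by rewrite ler_wpM2l ?exprn_ge0 ?(v_ge0 hv) ?v_natr_inv_le.
Qed.

Lemma v_lg1D_le (V : R) t : 1 < V -> v t <= V^-1 -> v (lg (1 + t)) <= (V - 1)^-1.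
Proof.
move=> V_gt1 vt_le; have Vinv_lt1 : V^-1 < 1 by rewrite invf_lt1 //; lra.
apply: (cvgK_le hv (lgser_cvg (le_lt_trans vt_le Vinv_lt1)) (N := 0)) => N _.
apply: (v_sum_le hv) => [|n _]; first by rewrite invr_ge0; lra.
apply: le_trans (v_lgser_term _ _) (le_trans _ (exprV_mul_natr_le n V_gt1)).
by rewrite ler_wpM2r // lerXn2r ?nnegrE ?(v_ge0 hv) // invr_ge0; lra.
Qed.

Lemma v_lg1D_sub_le s : v s <= 2^-1 -> v (lg (1 + s) - s) <= v s ^+ 2 * 2.
Proof.
move=> vs_le; have vs_ge0 := v_ge0 hv s.
have sub_cvg := cvgKD hv (lgser_cvg (t := s) ltac:(lra)) (cvgK_cst hv (- s)).
apply: (cvgK_le hv sub_cvg (N := 2)) => N N_ge2.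
rewrite /lgser big_ltn //= expr1 divr1 expr2 mulrNN mulr1 mul1r addrAC subrr add0r.
apply: (v_sum_le hv) => [|n]; first by rewrite mulr_ge0 ?exprn_ge0.
rewrite mem_index_iota => /andP[n_ge2 _]; apply: le_trans (v_lgser_term _ _) _.
case: n n_ge2 => [|[|k]] // _.
rewrite -[in v s ^+ _]addn2 exprD mulrAC [_ * 2]mulrC.
by rewrite ler_wpM2r ?exprn_ge0 // exprn_mul_natrSS_le // vs_ge0.
Qed.

Lemma v_lg1D_le_small s : v s <= 2^-1 -> v (lg (1 + s)) <= v s.
Proof.
move=> vs_le; have vs_ge0 := v_ge0 hv s.
rewrite -(subrK s (lg (1 + s))); apply: (vD_le hv) => //.
by apply: le_trans (v_lg1D_sub_le vs_le) _; rewrite expr2; nra.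
Qed.

Definition primlg (y : K) := y * lg y - y.

Lemma primlgN y : primlg (- y) = - primlg y.
Proof. by rewrite /primlg lgN; ring. Qed.

Variable x : K.
Hypothesis vx_gt1 : 1 < v x.

(* The region where [lg] is bounded and [primlg] Lipschitz; it is stable under
   integer shifts, which the alternating sums require. *)
Definition near_x (z : K) := v (z - x) <= 1 \/ v (z + x) <= 1.

Definition lipC : R := Num.max 1 (Num.max (v (lg x)) ((v x - 1)^-1)).

Lemma near_xN z : near_x z -> near_x (- z).
Proof.
case=> h; [right|left]; first by rewrite addrC -opprB (vN hv).
by rewrite -opprD (vN hv).
Qed.

Lemma near_xD z c : near_x z -> v c <= 1 -> near_x (z + c).
Proof. by case=> h vc; [left|right]; rewrite addrAC; apply: (vD_le hv). Qed.

Lemma near_x_v z : near_x z -> v z = v x.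
Proof.
have vx_gt_le1 c : v c <= 1 -> v c < v x by move/le_lt_trans; apply.
case=> h.
  by rewrite -(subrK x z) addrC (vD_eq hv) ?vx_gt_le1.
by rewrite -(addrK x z) addrC (vD_eq hv) ?(vN hv) ?vx_gt_le1.
Qed.

Lemma lg_near_x_le z : near_x z -> v (lg z) <= lipC.
Proof.
have near_le w c : v w = v x -> lg w = lg x -> v c <= 1 -> v (lg (w + c)) <= lipC.
  move=> vw lgw vc; have w_neq0 : w != 0.
    by apply/eqP => w0; move: vx_gt1; rewrite -vw w0 (v0 hv); lra.
  have vcw : v (c / w) <= (v x)^-1.
    by rewrite (vM hv) (vV hv) vw ler_piMl // invr_ge0 (v_ge0 hv).
  have vcw_lt1 : v (c / w) < v 1.
    by rewrite (v1 hv); apply: le_lt_trans vcw _; rewrite invf_lt1 ?(lt_trans ltr01 vx_gt1).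
  have oneD_neq0 : 1 + c / w != 0.
    by apply/eqP => /(congr1 v); rewrite (v0 hv) (vD_eq hv) // (v1 hv); apply/eqP; rewrite oner_eq0.
  have -> : w + c = w * (1 + c / w) by rewrite mulrDr mulr1 mulrCA divff // mulr1.
  rewrite lgM //.
  apply: (vD_le hv); first by rewrite lgw /lipC !le_max lexx orbT.
  by apply: le_trans (v_lg1D_le vx_gt1 vcw) _; rewrite /lipC !le_max lexx !orbT.
case=> h.
  by rewrite -(subrK x z) addrC; apply: near_le.
by rewrite -(addrK x z) addrC; apply: near_le; rewrite ?(vN hv) ?lgN.
Qed.

Lemma lipC_ge1 : 1 <= lipC. Proof. by rewrite /lipC le_max lexx. Qed.

Lemma primlg_lipschitz z h : near_x z -> v h <= 2^-1 ->
  v (primlg (z + h) - primlg z) <= lipC * v h.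
Proof.
move=> z_near vh_le; have vz := near_x_v z_near.
(* [lra] and [nra] only see the local context, not section hypotheses. *)
have vx_gt1' := vx_gt1.
have z_neq0 : z != 0 by apply/eqP => z0; move: vx_gt1; rewrite -vz z0 (v0 hv) ltr10.
set s := h / z; have h_eq : h = z * s by rewrite /s mulrCA divff ?mulr1.
have vh_eq : v h = v x * v s by rewrite h_eq (vM hv) vz.
have [vs_ge0 vh_ge0] := (v_ge0 hv s, v_ge0 hv h).
have vs_le : v s <= 2^-1 by nra.
have vs_lt1 : v s < v 1 by rewrite (v1 hv); lra.
have oneD_neq0 : 1 + s != 0.
  by apply/eqP => /(congr1 v); rewrite (v0 hv) (vD_eq hv) // (v1 hv); apply/eqP; rewrite oner_eq0.
have -> : primlg (z + h) - primlg z = h * lg z + z * ((lg (1 + s) - s) + s * lg (1 + s)).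
  have zh_eq : z + h = z * (1 + s) by rewrite h_eq mulrDr mulr1.
  by rewrite /primlg zh_eq lgM // h_eq; ring.
have lg_le := lg_near_x_le z_near; have C_ge1 := lipC_ge1.
apply: (vD_le hv); first by rewrite (vM hv) mulrC ler_wpM2r.
have rest_le : v ((lg (1 + s) - s) + s * lg (1 + s)) <= v s ^+ 2 * 2.
  apply: (vD_le hv); first exact: v_lg1D_sub_le.
  rewrite (vM hv) expr2; have := v_lg1D_le_small vs_le.
  have := v_ge0 hv (lg (1 + s)); nra.
rewrite (vM hv) vz; have := v_ge0 hv (lg (1 + s) - s + s * lg (1 + s)); nra.
Qed.

Lemma altsum_lipschitz M y h : near_x y -> v h <= 2^-1 ->
  v (altsum primlg M (y + h) - altsum primlg M y) <= lipC * v h.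
Proof.
move=> y_near vh_le; rewrite /altsum -sumrB.
apply: (v_sum_le hv) => [|a _]; first by rewrite mulr_ge0 ?(v_ge0 hv) // (le_trans ler01 lipC_ge1).
rewrite -mulrBl (vM hv) (v_signr hv) mulr1 (addrAC y h).
exact: primlg_lipschitz (near_xD y_near (v_natr_le1 hv _)) vh_le.
Qed.

Lemma altsum_cvg y : near_x y -> cvgK v (fun N => altsum primlg (p ^ N) y) (GpE v p lg y).
Proof.
move=> y_near; have lipC_ge0 := le_trans ler01 lipC_ge1.
have [l hl] : exists l, cvgK v (fun N => altsum primlg (p ^ N) y) l.
  apply: (cvgK_pexp_steps (B := lipC)) => n n_gt0.
  rewrite expnSr altsum_mul_sub ?odd_pexp //.
  apply: (v_sum_le hv) => [|j _]; first by rewrite mulr_ge0 ?(v_ge0 hv).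
  have vjp_le : v (j * p ^ n)%:R <= v (p ^ n)%:R.
    by rewrite natrM (vM hv) ler_piMl ?(v_ge0 hv) ?(v_natr_le1 hv).
  rewrite (vM hv) (v_signr hv) mul1r.
  apply: le_trans (altsum_lipschitz _ y_near (le_trans vjp_le _)) _.
    exact: v_natr_pexp_le_half.
  exact: ler_wpM2l.
have -> : GpE v p lg y = limK v (fun N => altsum primlg (p ^ N) y) by [].
by rewrite (limK_eq hv hl).
Qed.

Lemma GpE_reflect y : near_x y -> GpE v p lg (1 - y) = - GpE v p lg y.
Proof.
move=> y_near; have near1y : near_x (1 - y).
  by rewrite addrC; apply: near_xD (near_xN y_near) _; rewrite (v1 hv).
apply: (cvgK_unique hv (altsum_cvg near1y)).
apply: (cvgK_pexp_close (B := lipC) (cvgKN hv (altsum_cvg y_near))) => n n_gt0.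
rewrite altsum_reflect ?odd_pexp //; last exact: primlgN.
rewrite opprK addrC -{1}(subrK (p ^ n)%:R y).
apply: altsum_lipschitz (v_natr_pexp_le_half n_gt0).
by apply: near_xD y_near _; rewrite (vN hv) (le_trans (v_natr_pexp_le_half n_gt0)) //; lra.
Qed.

Lemma GpE_shift1 y : near_x y -> GpE v p lg (1 + y) + GpE v p lg y = 2 * primlg y.
Proof.
move=> y_near; have near1y : near_x (1 + y) by rewrite addrC; apply: near_xD; rewrite ?(v1 hv).
apply: (cvgK_unique hv (cvgKD hv (altsum_cvg near1y) (altsum_cvg y_near))).
apply: (cvgK_pexp_close (B := lipC) (cvgK_cst hv _)) => n n_gt0.
rewrite altsum_shift1 ?odd_pexp //.
have -> : primlg y + primlg (y + (p ^ n)%:R) - 2 * primlg y =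
          primlg (y + (p ^ n)%:R) - primlg y by ring.
exact: primlg_lipschitz y_near (v_natr_pexp_le_half n_gt0).
Qed.

End Padic.

Theorem proposition4p1 (p : nat) (R : realType) (K : closedFieldType)
  (v : K -> R) (lg : K -> K) :
  prime p -> odd p -> is_Cp v p -> iwasawa_log v p lg ->
  forall x : K, 1 < v x ->
    [/\ GpE v p lg (1 - x) + GpE v p lg x = 0,
        GpE v p lg x - GpE v p lg (- x) = 2 * x * (lg x - 1)
      & GpE v p lg (1 + x) + GpE v p lg x = 2 * x * (lg x - 1)].
Proof.
move=> p_prime p_odd Cp lg_iwasawa x vx_gt1.
have hv : nonarch_abs v by case: Cp.
have near_x_x : near_x v x x by left; rewrite subrr (v0 hv) ler01.
have near_x_1x : near_x v x (1 + x) by left; rewrite addrK (v1 hv).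
have G1x := GpE_reflect p_prime p_odd Cp lg_iwasawa vx_gt1 near_x_x.
have GNx := GpE_reflect p_prime p_odd Cp lg_iwasawa vx_gt1 near_x_1x.
have Gshift := GpE_shift1 p_prime p_odd Cp lg_iwasawa vx_gt1 near_x_x.
rewrite opprD addNKr in GNx.
have primlg_x : 2 * primlg lg x = 2 * x * (lg x - 1) by rewrite /primlg; ring.
split; first by rewrite G1x addNr.
  by rewrite GNx opprK addrC Gshift primlg_x.
by rewrite Gshift primlg_x.
Qed.
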